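(* Let $G$ be a simple graph, $r\ge 1$ an integer, and $S$ an independent $r$-incident multiset of vertices of $G$. Then there exist an independent $r$-incident multiset $S'$ of vertices of $G$ and an independent set $A\subseteq V(G)$ such that: (i) $\mathrm{supp}(S')$ contains no two vertices that are twins; (ii) $\mathrm{supp}(S')$ contains no vertex of degree $0$ or $1$; (iii) $S'(u)\in\{0,1,\dots,2^{r-1}-1\}$ for every vertex $u$; and $G\star^r S = G\star^1 A\star^r S'$.
   Context: Graphs are finite, simple and undirected; $N_G(u)$ is the set of neighbours of $u$. Two vertices $u,v$ are twins if $N_G(u)\setminus\{v\}=N_G(v)\setminus\{u\}$. A multiset $S$ of vertices is identified with its multiplicity function $S:V(G)\to\mathbb N$; its support is $\mathrm{supp}(S)=\{u: S(u)\ge 1\}$. A set $D$ of vertices is independent if no two vertices of $D$ are adjacent; a multiset is independent if its support is. For an integer $r\ge1$, a multiset $S$ is $r$-incident if for every $k\in\{0,1,\dots,r-1\}$ and every set $K\subseteq V(G)\setminus\mathrm{supp}(S)$ with $|K|=k+2$, the number $\sum_{u\in\bigcap_{v\in K}N_G(v)}S(u)$ is a multiple of $2^{\,r-k-\delta(k)}$, where $\delta(k)=1$ if $k=0$ and $\delta(k)=0$ otherwise. For an independent $r$-incident multiset $S$, the $r$-local complementation $G\star^r S$ is the graph on $V(G)$ in which distinct vertices $a,b$ are adjacent iff exactly one of the following holds: $a\sim_G b$, or $\sum_{u\in N_G(a)\cap N_G(b)}S(u)\equiv 2^{r-1}\pmod{2^r}$. For $r=1$ and an independent set $A=\{u_1,\dots,u_k\}$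 (viewed as a multiset with multiplicities $1$), $G\star^1 A = G\star u_1\star\cdots\star u_k$, where the local complementation $G\star u$ replaces the subgraph induced on $N_G(u)$ by its complement. *)

From mathcomp Require Import all_boot.
Set Implicit Arguments. Unset Strict Implicit. Unset Printing Implicit Defensive.

(* A finite simple graph on vertex type T : finType is a symmetric,
   irreflexive relation g : rel T.  A multiset of vertices is S : T -> nat. *)

Section Defs.
Variable T : finType.

Definition neighbors (g : rel T) (u : T) : {set T} := [set v | g u v].

Definition degree (g : rel T) (u : T) : nat := #|neighbors g u|.

Definition twins (g : rel T) (u v : T) : bool :=
  neighbors g u :\ v == neighbors g v :\ u.

Definition supp (S : T -> nat) : {set T} := [set u | 0 < S u].

Definition independent (g : rel T) (D : {set T}) : bool :=
  [forall u in D, forall v in D, ~~ g u v].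

Definition independent_ms (g : rel T) (S : T -> nat) : bool :=
  independent g (supp S).

Definition delta (k : nat) : nat := (k == 0%N).

Definition r_incident (g : rel T) (r : nat) (S : T -> nat) : Prop :=
  forall k : nat, k < r ->
  forall K : {set T}, K \subset ~: supp S -> #|K| = k.+2 ->
    2 ^ (r - k - delta k) %| \sum_(u | [forall v in K, g v u]) S u.

(* r-local complementation G *^r S (given by the formula; meaningful when S
   is independent and r-incident) *)
Definition rlc (g : rel T) (r : nat) (S : T -> nat) : rel T :=
  fun a b => (a != b) &&
    (g a b (+) ((\sum_(u | g a u && g b u) S u) %% 2 ^ r == 2 ^ r.-1)).

Definition lc1 (g : rel T) (u : T) : rel T :=
  fun a b => (a != b) && (g a b (+) (g u a && g u b)).

Definition lc_set (g : rel T) (A : {set T}) : rel T :=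
  foldl lc1 g (enum A).

End Defs.

From mathcomp Require Import all_boot zify.
Set Implicit Arguments. Unset Strict Implicit. Unset Printing Implicit Defensive.

(* Since supp S is independent, its twins are vertices with equal
   neighbourhoods, and every sum of S over the common neighbours of a set K
   of at least two vertices only sees the total weight of each such class;
   vertices of degree at most 1 are never common neighbours of two vertices.
   So each class of supp S can be merged into one representative of degree
   at least 2.  Reducing the merged weight w modulo 2^(r-1) changes each
   common sum by a multiple of 2^(r-1), which keeps r-incidence, and the bit
   (w / 2^(r-1)) mod 2 that is lost is restored by an ordinary local
   complementation at the representative, which toggles exactly the edges
   between its neighbours. *)

Lemma odd_sum (I : finType) (P : pred I) (F : I -> nat) :
  odd (\sum_(i | P i) F i) = odd (\sum_(i | P i) odd (F i)).
Proof.
elim/big_rec2: _ => // i m n _ IH.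
by rewrite !oddD IH oddb.
Qed.

Lemma mod_double_eq (m s : nat) : 0 < m -> m %| s ->
  (s %% (m * 2) == m) = odd (s %/ m).
Proof.
move=> m_gt0 /divnK {1}<-.
rewrite mulnC -muln_modr -[X in _ == X](muln1 m) eqn_pmul2l // modn2.
by case: odd.
Qed.

Section LocalComplementation.
Variable T : finType.
Implicit Types (g : rel T) (A D K : {set T}) (S : T -> nat).

Lemma independentP g D :
  reflect {in D &, forall u v, g u v = false} (independent g D).
Proof.
apply: (iffP forall_inP) => [H u v uD vD | H u uD].
  by apply/negbTE; move/forall_inP: (H u uD); apply.
by apply/forall_inP => v vD; rewrite H.
Qed.

Lemma foldl_lc1E g (s : seq T) a b : irreflexive g ->
  {in s &, forall u v, g u v = false} ->
  foldl (@lc1 T) g s a b =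
    (a != b) && (g a b (+) odd (count (fun u => g u a && g u b) s)).
Proof.
elim: s g => [|x s IH] g irr_g /= s_indep.
  by rewrite addbF; case: eqVneq => [->|]; rewrite ?irr_g.
have lc1_irr : irreflexive (lc1 g x) by move=> y; rewrite /lc1 eqxx.
have lc1_id u v : u \in s -> lc1 g x u v = g u v.
  move=> us; rewrite /lc1 (s_indep x u) ?inE ?eqxx ?us ?orbT //= addbF.
  by case: eqVneq => [->|]; rewrite ?irr_g.
rewrite IH //; last first.
  by move=> u v us vs; rewrite lc1_id // s_indep // inE ?us ?vs orbT.
rewrite (eq_in_count (a2 := fun u => g u a && g u b)); last first.
  by move=> u us; rewrite !lc1_id.
rewrite /lc1 oddD; case: eqVneq => //= _.
by rewrite oddb addbA.
Qed.

Lemma lc_setE g A a b : irreflexive g -> independent g A ->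
  lc_set g A a b = (a != b) && (g a b (+) odd #|[set u in A | g u a && g u b]|).
Proof.
move=> irr_g /independentP A_indep; rewrite /lc_set foldl_lc1E //; last first.
  by move=> u v; rewrite !mem_enum; apply: A_indep.
by rewrite -sum1_count big_enum_cond /= sum1dep_card.
Qed.

Lemma lc_set_id g A a b : irreflexive g -> independent g A ->
  (forall u, u \in A -> ~~ (g u a && g u b)) -> lc_set g A a b = g a b.
Proof.
move=> irr_g A_indep Hab; rewrite lc_setE // (_ : [set _ in _ | _] = set0).
  by rewrite cards0 addbF; case: eqVneq => [->|]; rewrite ?irr_g.
by apply/setP => u; rewrite !inE; case: (boolP (u \in A)) => // /Hab /negbTE.
Qed.

Definition common_sum g S K := \sum_(u | [forall v in K, g v u]) S u.

Lemma common_sum_eq0 g S K w : independent_ms g S ->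
  w \in K -> w \in supp S -> common_sum g S K = 0.
Proof.
move=> /independentP S_indep wK wS; apply: big1 => u /forall_inP /(_ w wK).
by case: (posnP (S u)) => // Su; rewrite S_indep // inE.
Qed.

Lemma r_incident_dvd g r S k K : independent_ms g S -> r_incident g r S ->
  k < r -> #|K| = k.+2 -> 2 ^ (r - k - delta k) %| common_sum g S K.
Proof.
move=> S_indep S_inc kr cardK.
have [/eqP|[w]] := set_0Vmem (K :&: supp S).
  by rewrite setI_eq0 disjoints_subset => KS; apply: S_inc.
by rewrite inE => /andP[wK wS]; rewrite (common_sum_eq0 S_indep wK wS).
Qed.

Lemma rlcE g r S a b : rlc g r S a b =
  (a != b) && (g a b (+) (common_sum g S [set a; b] %% 2 ^ r == 2 ^ r.-1)).
Proof.
rewrite /rlc /common_sum (eq_bigl (fun u => [forall v in [set a; b], g v u])) //.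
move=> u; apply/andP/forall_inP => [[au bu] v|H].
  by rewrite !inE => /orP[] /eqP ->.
by rewrite !H ?inE ?eqxx ?orbT.
Qed.

Section UntouchedMultiset.
Variables (g : rel T) (A : {set T}) (S : T -> nat).
Hypotheses (g_irr : irreflexive g) (A_indep : independent g A)
  (A_S : {in A & supp S, forall a u, g a u = false}).

Lemma lc_set_supp v u : u \in supp S -> lc_set g A v u = g v u.
Proof. by move=> uS; apply: lc_set_id => // a aA; rewrite (A_S aA uS) andbF. Qed.

Lemma common_sum_lc_set K : common_sum (lc_set g A) S K = common_sum g S K.
Proof.
rewrite /common_sum !(big_mkcond (fun u => [forall v in K, _ v u])).
apply: eq_bigr => u _; case: (posnP (S u)) => [->|Su]; first by do 2 case: ifP.
have uS : u \in supp S by rewrite inE.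
congr (if _ then _ else _).
by apply/forall_inP/forall_inP => H v /H; rewrite lc_set_supp.
Qed.

Lemma independent_ms_lc_set :
  independent_ms g S -> independent_ms (lc_set g A) S.
Proof.
move=> /independentP S_indep; apply/independentP => u v uS vS.
by rewrite lc_set_supp // S_indep.
Qed.

Lemma r_incident_lc_set r : r_incident g r S -> r_incident (lc_set g A) r S.
Proof.
move=> S_inc k kr K KS cardK.
by rewrite -[X in _ %| X]/(common_sum _ _ _) common_sum_lc_set //; apply: S_inc.
Qed.

End UntouchedMultiset.
End LocalComplementation.

Section ClassCompression.
Variables (T : finType) (key : eqType) (f : T -> key) (S : T -> nat).

Definition class_pick x := [pick v | (v \in supp S) && (f v == f x)].

Definition class_rep x := (x \in supp S) && (class_pick x == Some x).

Definition class_weight x := \sum_(v | f v == f x) S v.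

Lemma class_rep_eq x y : class_rep x -> class_rep y -> f x = f y -> x = y.
Proof.
rewrite /class_rep /class_pick => /andP[_ /eqP px] /andP[_ /eqP py] fxy.
by move: px; rewrite fxy py => -[].
Qed.

Lemma class_rep_exists u : u \in supp S -> exists2 x, class_rep x & f x = f u.
Proof.
move=> uS; move: (erefl (class_pick u)); rewrite {2}/class_pick.
case: pickP => [x /andP[xS /eqP fx] pu | /(_ u)]; last by rewrite /= uS eqxx.
exists x => //; rewrite /class_rep xS /class_pick fx.
by move: pu; rewrite /class_pick => /eqP.
Qed.

Lemma sum_by_class (C : pred T) : (forall u v, f u = f v -> C u = C v) ->
  \sum_(u | C u) S u = \sum_(x | C x && class_rep x) class_weight x.
Proof.
move=> C_class.
transitivity (\sum_(u | C u) \sum_(x | class_rep x && (f x == f u)) S u).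
  apply: eq_bigr => u _; case: (posnP (S u)) => [->|Su]; first by rewrite big1.
  have [|x0 rep_x0 f_x0] := @class_rep_exists u; first by rewrite inE.
  rewrite (big_pred1 x0) // => x; apply/andP/eqP => [[rep_x /eqP fx]|->].
    by apply: class_rep_eq; rewrite // fx.
  by rewrite f_x0.
rewrite (exchange_big_dep class_rep) /=; last by move=> u x _ /andP[].
rewrite [RHS](eq_bigl (fun x => class_rep x && C x)) => [|x]; last exact: andbC.
rewrite [RHS]big_mkcondr; apply: eq_bigr => x rep_x; rewrite rep_x.
case: (boolP (C x)) => Cx; last first.
  by rewrite big1 // => u /andP[Cu /eqP fu]; move: Cx; rewrite (C_class _ _ fu) Cu.
apply: eq_bigl => u; rewrite eq_sym.
by case: eqVneq => [/C_class ->|]; rewrite ?andbF ?andbT.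
Qed.

End ClassCompression.

Section TwinReduction.
Variables (T : finType) (g : rel T) (r : nat) (S : T -> nat).
Hypotheses (g_sym : symmetric g) (g_irr : irreflexive g) (r_gt0 : 0 < r)
  (S_indep : independent_ms g S) (S_inc : r_incident g r S).

Local Notation N := (neighbors g).
Local Notation m := (2 ^ r.-1).

Definition reduced_vertex x := class_rep N S x && (1 < degree g x).

Definition reduced_ms x :=
  if reduced_vertex x then class_weight N S x %% 2 ^ r.-1 else 0.

Definition carry_set :=
  [set x | reduced_vertex x && odd (class_weight N S x %/ 2 ^ r.-1)].

Local Notation S' := reduced_ms.
Local Notation A := carry_set.
Local Notation adj_all K x := [forall v in K, g v x].
Implicit Types (K : {set T}) (u x : T).

Lemma reduced_vertex_supp x : reduced_vertex x -> x \in supp S.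
Proof. by case/andP => /andP[]. Qed.

Lemma reduced_ms_supp u : u \in supp S' -> reduced_vertex u.
Proof. by rewrite inE /reduced_ms; case: reduced_vertex. Qed.

Lemma carry_set_reduced x : x \in A -> reduced_vertex x.
Proof. by rewrite inE => /andP[]. Qed.

Lemma adj_allE K x : adj_all K x = (K \subset N x).
Proof.
by apply/forall_inP/subsetP => H v /H; rewrite inE g_sym.
Qed.

Lemma adj_all_degree K x : 2 <= #|K| -> adj_all K x -> 1 < degree g x.
Proof. by rewrite adj_allE => cardK /subset_leq_card; apply: leq_trans. Qed.

Lemma common_sum_classes K : common_sum g S K =
  \sum_(x | adj_all K x && class_rep N S x) class_weight N S x.
Proof. by apply: sum_by_class => u v Nuv; rewrite !adj_allE Nuv. Qed.

Lemma common_sum_reduced K : 2 <= #|K| -> common_sum g S' K =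
  \sum_(x | adj_all K x && class_rep N S x) (class_weight N S x %% m).
Proof.
move=> cardK; rewrite /common_sum big_mkcondr; apply: eq_bigr => x Kx.
by rewrite /reduced_ms /reduced_vertex (adj_all_degree cardK Kx) andbT.
Qed.

Lemma common_sum_decomp K : 2 <= #|K| -> common_sum g S K =
  (\sum_(x | adj_all K x && class_rep N S x) (class_weight N S x %/ m)) * m
  + common_sum g S' K.
Proof.
move=> cardK; rewrite common_sum_classes common_sum_reduced // big_distrl.
by rewrite -big_split; apply: eq_bigr => x _; apply: divn_eq.
Qed.

Lemma odd_carry K : 2 <= #|K| ->
  odd #|[set x in A | adj_all K x]| =
  odd (\sum_(x | adj_all K x && class_rep N S x) (class_weight N S x %/ m)).
Proof.
move=> cardK; rewrite odd_sum -sum1dep_card big_mkcond [in RHS]big_mkcond /=.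
congr odd; apply: eq_bigr => x _; rewrite !inE /reduced_vertex.
case Kx: (adj_all K x); rewrite ?andbF // (adj_all_degree cardK Kx) andbT /=.
by rewrite andbT; case: class_rep; case: odd.
Qed.

Lemma supp_reduced_ms : {subset supp S' <= supp S}.
Proof. by move=> u /reduced_ms_supp /reduced_vertex_supp. Qed.

Lemma carry_set_supp : {subset A <= supp S}.
Proof. by move=> x /carry_set_reduced /reduced_vertex_supp. Qed.

Lemma reduced_ms_indep : independent_ms g S'.
Proof.
apply/independentP => u v /supp_reduced_ms uS /supp_reduced_ms vS.
by move/independentP: S_indep; apply.
Qed.

Lemma carry_set_indep : independent g A.
Proof.
apply/independentP => u v /carry_set_supp uS /carry_set_supp vS.
by move/independentP: S_indep; apply.
Qed.

Lemma carry_set_reduced_ms : {in A & supp S', forall a u, g a u = false}.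
Proof.
move=> a u /carry_set_supp aS /supp_reduced_ms uS.
by move/independentP: S_indep; apply.
Qed.

Lemma reduced_ms_incident : r_incident g r S'.
Proof.
move=> k kr K _ cardK.
have e_le : r - k - delta k <= r.-1.
  by rewrite /delta; case: k {cardK} kr => /=; lia.
have := r_incident_dvd S_indep S_inc kr cardK.
rewrite common_sum_decomp ?cardK // dvdn_addr //.
exact/dvdn_mull/dvdn_exp2l.
Qed.

Lemma reduced_ms_lt u : S' u < m.
Proof. by rewrite /reduced_ms; case: ifP => _; rewrite ?ltn_pmod ?expn_gt0. Qed.

Lemma reduced_ms_degree u : u \in supp S' -> 1 < degree g u.
Proof. by case/reduced_ms_supp/andP. Qed.

Lemma reduced_ms_no_twins u v :
  u \in supp S' -> v \in supp S' -> u != v -> ~~ twins g u v.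
Proof.
move=> /reduced_ms_supp ru /reduced_ms_supp rv; apply: contra_neqN => /eqP tw.
have nonadj x y : x \in supp S -> y \in supp S -> N x :\ y = N x.
  move=> xS yS; apply/setP => w; rewrite !inE; case: eqVneq => //= ->.
  by move/independentP: S_indep => ->.
have uS := reduced_vertex_supp ru; have vS := reduced_vertex_supp rv.
move: ru rv tw => /andP[ru _] /andP[rv _]; rewrite !nonadj //.
exact: class_rep_eq ru rv.
Qed.

Lemma rlc_reduced : rlc g r S =2 rlc (lc_set g A) r S'.
Proof.
move=> a b; rewrite !rlcE common_sum_lc_set ?carry_set_indep //; last first.
  exact: carry_set_reduced_ms.
case: eqVneq => //= ab; have cardK : #|[set a; b]| = 2 by rewrite cards2 ab.
rewrite lc_setE ?carry_set_indep // ab /=.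
have m_dvd : m %| common_sum g S [set a; b].
  have := r_incident_dvd S_indep S_inc r_gt0 cardK.
  by rewrite /delta /= subn0 subn1.
have r_double : 2 ^ r = m * 2 by rewrite -expnSr prednK.
move: m_dvd; rewrite r_double common_sum_decomp ?cardK // => m_dvd.
have m_dvd' : m %| common_sum g S' [set a; b].
  by rewrite dvdn_addr ?dvdn_mull in m_dvd.
rewrite !mod_double_eq ?expn_gt0 // divnMDl ?expn_gt0 // oddD -odd_carry ?cardK //.
rewrite (eq_card (B := [set x in A | [forall v in [set a; b], g v x]])) ?addbA //.
move=> x; rewrite !inE; congr (_ && _); apply/andP/forall_inP => [[ax bx] v|H].
  by rewrite !inE => /orP[] /eqP ->; rewrite g_sym.
by rewrite !(g_sym x) !H ?inE ?eqxx ?orbT.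
Qed.

End TwinReduction.

Theorem mainTheorem1 (T : finType) (g : rel T) (r : nat) (S : T -> nat) :
  symmetric g -> irreflexive g -> 1 <= r ->
  independent_ms g S -> r_incident g r S ->
  exists (S' : T -> nat) (A : {set T}),
    [/\ independent_ms g S', r_incident g r S',
        independent_ms (lc_set g A) S', r_incident (lc_set g A) r S'
      & independent g A] /\
    [/\
        (forall u v, u \in supp S' -> v \in supp S' -> u != v -> ~~ twins g u v),
        (forall u, u \in supp S' -> 2 <= degree g u),
        (forall u, S' u < 2 ^ r.-1)
      & rlc g r S =2 rlc (lc_set g A) r S'].
Proof.
move=> g_sym g_irr r_gt0 S_indep S_inc.
exists (reduced_ms g r S), (carry_set g r S).
have S'_indep := reduced_ms_indep r S_indep.
have S'_inc := reduced_ms_incident g_sym r_gt0 S_indep S_inc.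
have A_indep := carry_set_indep r S_indep.
have A_S' := carry_set_reduced_ms (r := r) S_indep.
split; split => //.
- exact: independent_ms_lc_set.
- exact: r_incident_lc_set.
- exact: reduced_ms_no_twins.
- exact: reduced_ms_degree.
- exact: reduced_ms_lt.
- exact: rlc_reduced.
Qed.
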